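(* Let $\Gamma$ be a simplicial complex on $V_1=\{x_1,\ldots,x_n\}$ with $m$ facets. Let $G_1,\ldots,G_m\subseteq V_1$ be such that each $V_1\setminus G_j$ is a face of $\Gamma$ and every facet of $\Gamma$ is of the form $V_1\setminus G_j$ for some $j$. Let $y_1,\ldots,y_m$ be new vertices, let $\Delta_{V_1}$ be the $(n-1)$-simplex on $x_1,\ldots,x_n$, and define \[\Delta'=\left\{\sigma\cup\tau:\ \sigma\in\Gamma,\ \tau\subseteq\{y_j:\sigma\subseteq V_1\setminus G_j\}\right\},\qquad \Delta=\Delta'\cup\Delta_{V_1}.\] Then for all $i\geq0$, $\widetilde H_{i+1}(\Delta;\mathbb Z)\cong\widetilde H_i(\Gamma;\mathbb Z)$.
   Context: $\widetilde H_i(-;\mathbb Z)$ denotes reduced simplicial homology with integer coefficients. *)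

From mathcomp Require Import all_boot all_order all_algebra.
Set Implicit Arguments. Unset Strict Implicit. Unset Printing Implicit Defensive.
Import GRing.Theory Num.Theory.
Local Open Scope ring_scope.

Definition is_complex (N : nat) (K : {set {set 'I_N}}) : Prop :=
  set0 \in K /\ (forall s t : {set 'I_N}, t \subset s -> s \in K -> t \in K).

Definition facets (N : nat) (K : {set {set 'I_N}}) : {set {set 'I_N}} :=
  [set s in K | [forall t in K, (s \subset t) ==> (t == s)]].

(* An (oriented) i-simplex is a face of cardinality i+1, oriented by the
   natural order of 'I_N. Degree -1 (the empty face) is included implicitly
   by the boundary of 0-chains landing on set0: this is the augmented
   (reduced) chain complex. *)
Definition chainf (N : nat) := {set 'I_N} -> int.

Definition is_chain (N : nat) (K : {set {set 'I_N}}) (i : nat) (c : chainf N) : Prop :=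
  forall s, c s != 0 -> s \in K /\ #|s| = i.+1.

Definition bd (N : nat) (c : chainf N) : chainf N :=
  fun t => \sum_(v : 'I_N | v \notin t)
             (-1) ^+ #|[set u in t | (u < v)%N]| * c (v |: t).

Definition is_cycle (N : nat) (K : {set {set 'I_N}}) (i : nat) (c : chainf N) : Prop :=
  is_chain K i c /\ bd c =1 (fun _ => 0).

Definition is_boundary (N : nat) (K : {set {set 'I_N}}) (i : nat) (c : chainf N) : Prop :=
  exists b : chainf N, is_chain K i.+1 b /\ c =1 bd b.

Definition addc (N : nat) (c d : chainf N) : chainf N := fun s => c s + d s.
Definition subc (N : nat) (c d : chainf N) : chainf N := fun s => c s - d s.

(* A group homomorphism between quotient groups Z/B -> Z'/B'
   is represented (as usual) by a map f on representatives that sends cycles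
   to cycles, is additive modulo boundaries and sends boundaries to
   boundaries; it is an isomorphism iff it is injective and surjective on
   classes. *)
Definition rhomology_iso (N1 N2 : nat) (K1 : {set {set 'I_N1}}) (i1 : nat)
    (K2 : {set {set 'I_N2}}) (i2 : nat) : Prop :=
  exists f : chainf N1 -> chainf N2,
    [/\ (forall z, is_cycle K1 i1 z -> is_cycle K2 i2 (f z)),
        (forall z w, is_cycle K1 i1 z -> is_cycle K1 i1 w ->
           is_boundary K2 i2 (subc (subc (f (addc z w)) (f z)) (f w))),
        (forall z, is_boundary K1 i1 z -> is_boundary K2 i2 (f z)),
        (forall z, is_cycle K1 i1 z -> is_boundary K2 i2 (f z) ->
           is_boundary K1 i1 z)
      & (forall w, is_cycle K2 i2 w ->
           exists2 z, is_cycle K1 i1 z & is_boundary K2 i2 (subc w (f z)))].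

(* Vertices of Delta: x_k = k (k < n), y_j = n + j (j < m), in 'I_(n+m). *)
Definition xv (n m : nat) (s : {set 'I_n}) : {set 'I_(n + m)} := [set lshift m k | k in s].
Definition yv (n m : nat) (t : {set 'I_m}) : {set 'I_(n + m)} := [set rshift n j | j in t].

Definition Delta' (n m : nat) (Gamma : {set {set 'I_n}}) (G : 'I_m -> {set 'I_n})
  : {set {set 'I_(n + m)}} :=
  [set xv m s :|: yv n t | s in Gamma,
     t in [set t : {set 'I_m} | t \subset [set j | s \subset ~: G j]]].

Definition simplexV1 (n m : nat) : {set {set 'I_(n + m)}} :=
  [set xv m s | s : {set 'I_n}].

Definition Delta (n m : nat) (Gamma : {set {set 'I_n}}) (G : 'I_m -> {set 'I_n})
  : {set {set 'I_(n + m)}} := Delta' Gamma G :|: simplexV1 n m.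

(* Delta is the union of Delta' and the full simplex on V1, and the faces they
   share are those of Gamma.  Both pieces are acyclic: the simplex is a cone,
   and Delta' is covered by local cones, because a face sigma u tau can be
   joined to any y_j with sigma \subset V1 \ G_j, and such a j exists since
   every face of Gamma lies in a facet V1 \ G_j.  So the Mayer-Vietoris
   connecting map H_{i+1}(Delta) -> H_i(Gamma), sending a cycle to the boundary
   of its part off the simplex, is an isomorphism. *)

From mathcomp Require Import all_boot all_order all_algebra.
From mathcomp Require Import zify ring.
From Stdlib Require Import FunctionalExtensionality.
Set Implicit Arguments. Unset Strict Implicit. Unset Printing Implicit Defensive.
Import GRing.Theory Num.Theory.
Local Open Scope ring_scope.

Definition down_closed N (D : {set {set 'I_N}}) : Prop :=
  forall s t : {set 'I_N}, t \subset s -> s \in D -> t \in D.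

Definition acyclic N (D : {set {set 'I_N}}) : Prop :=
  forall k c, is_cycle D k c -> is_boundary D k c.

Section Boundary.
Variable N : nat.
Implicit Types (c d : chainf N) (s t : {set 'I_N}) (u v w : 'I_N).

Definition bd_sign t v : int := (-1) ^+ #|[set u in t | (u < v)%N]|.

Lemma bd_signU1 t u v : u \notin t -> u != v ->
  bd_sign (u |: t) v = (if (u < v)%N then -1 else 1) * bd_sign t v.
Proof.
move=> ut uv; rewrite /bd_sign; case: ifP => uv'.
  have -> : [set x in u |: t | (x < v)%N] = u |: [set x in t | (x < v)%N].
    by apply/setP=> x; rewrite !inE; case: eqP => [->|]; rewrite ?uv' ?orbF.
  by rewrite cardsU1 inE (negbTE ut) /= exprS.
have -> : [set x in u |: t | (x < v)%N] = [set x in t | (x < v)%N].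
  by apply/setP=> x; rewrite !inE; case: eqP => [->|]; rewrite ?uv' ?andbF.
by rewrite mul1r.
Qed.

Lemma bd_sign_sqr t v : bd_sign t v * bd_sign t v = 1.
Proof. by rewrite /bd_sign -exprD -signr_odd oddD addbb. Qed.

Lemma sign_ltn_swap u v : u != v ->
  (if (u < v)%N then -1 else 1) = - (if (v < u)%N then -1 else 1) :> int.
Proof.
move=> uv; have /eqP : (u : nat) != v by [].
by case: (ltngtP u v) => //= _ _; rewrite ?opprK.
Qed.

Lemma bd_sign_swap t v w : v \notin t -> w \notin t -> v != w ->
  bd_sign t v * bd_sign (v |: t) w = - (bd_sign t w * bd_sign (w |: t) v).
Proof.
move=> vt wt vw; rewrite (bd_signU1 vt vw) (bd_signU1 wt) 1?eq_sym //.
rewrite (sign_ltn_swap vw); ring.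
Qed.

Lemma bdD c d t : bd (fun s => c s + d s) t = bd c t + bd d t.
Proof. by rewrite /bd -big_split; apply: eq_bigr => v _; rewrite mulrDr. Qed.

Lemma bdN c t : bd (fun s => - c s) t = - bd c t.
Proof. by rewrite /bd -sumrN; apply: eq_bigr => v _; rewrite mulrN. Qed.

Lemma bdB c d t : bd (fun s => c s - d s) t = bd c t - bd d t.
Proof. by rewrite (bdD c (fun s => - d s)) bdN. Qed.

Lemma bd0 t : bd (fun _ : {set 'I_N} => 0) t = 0.
Proof. by rewrite /bd big1 // => v _; rewrite mulr0. Qed.

Lemma eq_bd c d : c =1 d -> bd c =1 bd d.
Proof. by move=> e t; apply: eq_bigr => v _; rewrite e. Qed.

Lemma bd_neq0 c t : bd c t != 0 -> exists2 v, v \notin t & c (v |: t) != 0.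
Proof.
move=> h; case: (pickP (fun v => (v \notin t) && (c (v |: t) != 0))) => [v /andP[]|none].
  by exists v.
move: h; rewrite /bd big1 ?eqxx // => v vt.
by move: (none v); rewrite vt /= => /negbFE/eqP ->; rewrite mulr0.
Qed.

(* Both iterated sums run over ordered pairs of distinct vertices, and the
   summand is antisymmetric under exchanging the pair. *)
Lemma bd_bd c t : bd (bd c) t = 0.
Proof.
pose F v w := if [&& v \notin t, w \notin t & v != w]
  then bd_sign t v * bd_sign (v |: t) w * c (w |: (v |: t)) else 0.
have -> : bd (bd c) t = \sum_v \sum_w F v w.
  rewrite /bd big_mkcond; apply: eq_bigr => v _.
  case vt: (v \notin t) => /=; last by rewrite big1 // => w _; rewrite /F vt.
  rewrite big_distrr big_mkcond; apply: eq_bigr => w _.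
  rewrite /F vt in_setU1 negb_or eq_sym /=.
  by case: (w \notin t); case: (v != w) => //=; rewrite mulrA.
have F_anti v w : F v w = - F w v.
  rewrite /F eq_sym; case vt: (v \notin t); case wt: (w \notin t);
    rewrite /= ?oppr0 //; case: eqP => [->|/eqP vw]; rewrite ?oppr0 //=.
  by rewrite eq_sym in vw; rewrite setUCA (bd_sign_swap vt wt vw) mulNr.
suff S_anti : \sum_v \sum_w F v w = - \sum_v \sum_w F v w by lia.
rewrite [LHS]exchange_big -sumrN; apply: eq_bigr => w _; rewrite -sumrN.
by apply: eq_bigr => v _; rewrite F_anti.
Qed.

Definition cone (a : 'I_N) c : chainf N :=
  fun s => if a \in s then bd_sign (s :\ a) a * c (s :\ a) else 0.

Lemma bd_cone a c t : bd (cone a c) t + cone a (bd c) t = c t.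
Proof.
rewrite /cone; case: ifP => at_; last first.
  rewrite addr0 /bd (bigD1 a) ?at_ //= big1 ?addr0.
    by rewrite setU1K ?at_ // in_setU1 eqxx /= mulrA bd_sign_sqr mul1r.
  move=> v /andP[vt va]; rewrite in_setU1 eq_sym (negbTE va) at_ /= mulr0 //.
set t' := t :\ a.
have at' : a \notin t' by rewrite !inE eqxx.
have tE : t = a |: t' by rewrite setD1K.
rewrite /bd [X in _ + _ * X](bigD1 a) //= -tE mulrDr mulrA bd_sign_sqr mul1r.
rewrite addrC -addrA -[RHS]addr0; congr (_ + _).
have memt v : (v \notin t') && (v != a) = (v \notin t).
  by rewrite /t' !inE; case: eqP => [->|_] /=; rewrite ?at_ ?andbT.
rewrite big_distrr /= (eq_bigl _ _ memt) -big_split /= big1 // => v vt.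
have va : v != a by apply: contraNneq vt => ->.
have vt' : v \notin t' by rewrite -memt in vt; case/andP: vt.
have -> : (v |: t) :\ a = v |: t'.
  by rewrite tE setUCA setU1K // in_setU1 negb_or eq_sym va at'.
rewrite in_setU1 at_ orbT /= -/(bd_sign t' v) -/(bd_sign t v) [in bd_sign t v]tE.
have av : a != v by rewrite eq_sym.
rewrite (bd_signU1 at' av) (bd_signU1 vt' va) (sign_ltn_swap va).
by case: ifP => _; ring.
Qed.

End Boundary.

Lemma addr_neq0_split (V : zmodType) (x y : V) : x + y != 0 -> x != 0 \/ y != 0.
Proof. by case: (x =P 0) => [->|/eqP]; [rewrite add0r; right|left]. Qed.

Section Chains.
Variables (N : nat) (D : {set {set 'I_N}}).
Implicit Types (k : nat) (c d : chainf N).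

Lemma chain0 k : is_chain D k (fun _ => 0).
Proof. by move=> s; rewrite eqxx. Qed.

Lemma chainD k c d : is_chain D k c -> is_chain D k d -> is_chain D k (fun s => c s + d s).
Proof. by move=> hc hd s /addr_neq0_split [/hc|/hd]. Qed.

Lemma chainN k c : is_chain D k c -> is_chain D k (fun s => - c s).
Proof. by move=> hc s; rewrite oppr_eq0 => /hc. Qed.

Lemma chainB k c d : is_chain D k c -> is_chain D k d -> is_chain D k (fun s => c s - d s).
Proof. by move=> hc hd; apply: chainD => //; apply: chainN. Qed.

Lemma chain_mask k (P : pred {set 'I_N}) c :
  is_chain D k c -> is_chain D k (fun s => if P s then c s else 0).
Proof. by move=> hc s; case: ifP => _; [apply: hc | rewrite eqxx]. Qed.

Lemma chain_sub k (E : {set {set 'I_N}}) c :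
  {subset D <= E} -> is_chain D k c -> is_chain E k c.
Proof. by move=> sDE hc s /hc [/sDE]. Qed.

Lemma bd_chain k c : down_closed D -> is_chain D k.+1 c -> is_chain D k (bd c).
Proof.
move=> dc hc t /bd_neq0 [v vt /hc [vD cv]]; split; first exact: dc (subsetUr _ _) vD.
by move: cv; rewrite cardsU1 vt add1n => -[].
Qed.

Lemma boundary0 k : is_boundary D k (fun _ => 0).
Proof. by exists (fun _ => 0); split; [apply: chain0 | move=> t; rewrite bd0]. Qed.

End Chains.

(* Coning
   away the faces with the largest X-part leaves a homologous cycle whose
   X-parts are all smaller, so induction on that size bounds every cycle. *)
Section LocalCones.
Variables (N : nat) (D : {set {set 'I_N}}) (X : pred 'I_N).
Variable apex : {set 'I_N} -> 'I_N.
Hypothesis D_closed : down_closed D.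
Hypothesis apex_notin_X : forall u, ~~ X (apex u).
Hypothesis apex_face : forall t, t \in D -> apex [set u in t | X u] |: t \in D.

Local Notation Xpart t := [set u in t | X u].
Implicit Types (c : chainf N) (s t : {set 'I_N}) (v : 'I_N).

Definition local_cone c : chainf N := fun s => cone (apex (Xpart s)) c s.

Lemma XpartU1 v s : Xpart (v |: s) = if X v then v |: Xpart s else Xpart s.
Proof.
by apply/setP => u; case: ifP => Xv; rewrite !inE; case: (u =P v) => [->|_] /=;
  rewrite ?Xv ?andbF.
Qed.

Lemma XpartD1 a s : ~~ X a -> Xpart (s :\ a) = Xpart s.
Proof.
move=> Xa; apply/setP => u; rewrite !inE; case: eqP => [->|] //=.
by rewrite (negbTE Xa) andbF.
Qed.

Lemma local_cone_chain k c : is_chain D k c -> is_chain D k.+1 (local_cone c).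
Proof.
move=> hc s; rewrite /local_cone /cone; set a := apex _.
case: ifP => [as_|]; last by rewrite eqxx.
rewrite mulf_eq0 negb_or => /andP[_ /hc [sD cs]].
split; last by rewrite (cardsD1 a s) as_ cs.
by move: (apex_face sD); rewrite XpartD1 ?apex_notin_X // -/a setD1K.
Qed.

Lemma bd_local_cone_top p c s : (forall s, c s != 0 -> (#|Xpart s| <= p)%N) ->
  bd c =1 (fun _ => 0) -> (p <= #|Xpart s|)%N -> bd (local_cone c) s = c s.
Proof.
move=> cp cc ps.
have cone_out b v : ~~ X b -> v \notin s -> X v -> cone b c (v |: s) = 0.
  move=> Xb vs Xv; rewrite /cone; case: ifP => // _.
  apply/eqP; rewrite mulf_eq0; apply/orP; right; apply/negP => /negP /cp.
  rewrite XpartD1 // XpartU1 Xv cardsU1 inE (negbTE vs) /= add1n.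
  by move=> /leq_trans/(_ ps); rewrite ltnn.
have -> : bd (local_cone c) s = bd (cone (apex (Xpart s)) c) s.
  apply: eq_bigr => v vs; rewrite /local_cone; case Xv: (X v); first by rewrite !cone_out.
  by rewrite XpartU1 Xv.
have := bd_cone (apex (Xpart s)) c s; rewrite {2}/cone.
by case: ifP => _; rewrite ?cc ?mulr0 addr0.
Qed.

Lemma local_cones_acyclic : acyclic D.
Proof.
move=> k; suff bounded : forall p c, is_cycle D k c ->
    (forall s, c s != 0 -> (#|Xpart s| < p)%N) -> is_boundary D k c.
  move=> c cc; apply: (bounded N.+1) => // s _.
  by rewrite (leq_ltn_trans (max_card _)) // card_ord.
elim=> [|p IH] c [cch ccy] cp.
  suff -> : c = fun _ => 0 by apply: boundary0.
  by apply: functional_extensionality => s; apply/eqP; apply: contraT => /cp.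
pose c' s := c s - bd (local_cone c) s.
have [b [bch bE]] : is_boundary D k c'.
  apply: IH.
    split; first by apply: chainB => //; apply: bd_chain (local_cone_chain _).
    by move=> t; rewrite /c' bdB ccy bd_bd subrr.
  move=> s; apply: contraR; rewrite -leqNgt => ps.
  by rewrite /c' (bd_local_cone_top (p := p)) ?subrr // => u /cp; rewrite ltnS.
exists (fun s => b s + local_cone c s); split; first by apply: chainD => //; apply: local_cone_chain.
by move=> t; rewrite bdD -bE /c' subrK.
Qed.

End LocalCones.

Section SplitVertices.
Variables n m : nat.
Implicit Types (s t : {set 'I_(n + m)}) (c d : chainf (n + m)) (w : chainf n).
Implicit Types (a : {set 'I_n}) (b : {set 'I_m}) (k : 'I_n) (j : 'I_m).

Definition xpart s : {set 'I_n} := [set k | lshift m k \in s].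
Definition ypart s : {set 'I_m} := [set j | rshift n j \in s].
Definition is_xface s := ypart s == set0.

Lemma lshift_in_xv k a : (lshift m k \in xv m a) = (k \in a).
Proof. exact/mem_imset/lshift_inj. Qed.
Lemma lshift_in_yv k b : (lshift m k \in yv n b) = false.
Proof. by apply/imsetP => -[j _ /eqP]; rewrite eq_lrshift. Qed.
Lemma rshift_in_xv j a : (rshift n j \in xv m a) = false.
Proof. by apply/imsetP => -[k _ /eqP]; rewrite eq_rlshift. Qed.
Lemma rshift_in_yv j b : (rshift n j \in yv n b) = (j \in b).
Proof. exact/mem_imset/rshift_inj. Qed.

Lemma xpart_ypartK s : xv m (xpart s) :|: yv n (ypart s) = s.
Proof.
apply/setP => i; rewrite -(splitK i); case: (split i) => [k|j] /=;
  by rewrite in_setU ?lshift_in_xv ?lshift_in_yv ?rshift_in_xv ?rshift_in_yv !inE ?orbF.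
Qed.

Lemma xpart_xvyv a b : xpart (xv m a :|: yv n b) = a.
Proof. by apply/setP => k; rewrite !inE lshift_in_xv lshift_in_yv orbF. Qed.
Lemma ypart_xvyv a b : ypart (xv m a :|: yv n b) = b.
Proof. by apply/setP => j; rewrite !inE rshift_in_xv rshift_in_yv. Qed.
Lemma xpart_xv a : xpart (xv m a) = a.
Proof. by apply/setP => k; rewrite !inE lshift_in_xv. Qed.
Lemma ypart_xv a : ypart (xv m a) = set0.
Proof. by apply/setP => j; rewrite !inE rshift_in_xv. Qed.

Lemma card_xv a : #|xv m a| = #|a|.
Proof. exact/card_imset/lshift_inj. Qed.

Lemma xvU1 k a : xv m (k |: a) = lshift m k |: xv m a.
Proof. exact: imsetU1. Qed.

Lemma xpart_sub s t : t \subset s -> xpart t \subset xpart s.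
Proof. by move=> ts; apply/subsetP => k; rewrite !inE => /(subsetP ts). Qed.
Lemma ypart_sub s t : t \subset s -> ypart t \subset ypart s.
Proof. by move=> ts; apply/subsetP => j; rewrite !inE => /(subsetP ts). Qed.

Lemma is_xfaceE s : is_xface s -> s = xv m (xpart s).
Proof. by move/eqP => h; rewrite -{1}(xpart_ypartK s) h /yv imset0 setU0. Qed.

Lemma is_xface_xv a : is_xface (xv m a).
Proof. by rewrite /is_xface ypart_xv. Qed.

Lemma is_xface_sub s t : t \subset s -> is_xface s -> is_xface t.
Proof. by move=> /ypart_sub ts; rewrite /is_xface -!subset0 => /(subset_trans ts). Qed.

Lemma bd_sign_xv a k : bd_sign (xv m a) (lshift m k) = bd_sign a k.
Proof.
rewrite /bd_sign; congr (_ ^+ _).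
have -> : [set u in xv m a | (u < lshift m k)%N] = xv m [set u in a | (u < k)%N].
  apply/setP => i; rewrite -(splitK i); case: (split i) => [k'|j] /=.
    by rewrite !inE !lshift_in_xv !inE.
  by rewrite !inE !rshift_in_xv.
exact: card_xv.
Qed.

Definition xsupported c := forall s, c s != 0 -> is_xface s.

Definition pull c : chainf n := fun a => c (xv m a).
Definition push w : chainf (n + m) := fun s => if is_xface s then w (xpart s) else 0.
Definition restX c : chainf (n + m) := fun s => if is_xface s then c s else 0.
Definition restY c : chainf (n + m) := fun s => if is_xface s then 0 else c s.

Lemma restXY c s : c s = restX c s + restY c s.
Proof. by rewrite /restX /restY; case: ifP; rewrite ?addr0 ?add0r. Qed.

Lemma bd_restXY c t : bd c t = bd (restX c) t + bd (restY c) t.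
Proof. by rewrite -bdD; apply: eq_bigr => v _; rewrite -restXY. Qed.

Lemma restX_xsupported c : xsupported (restX c).
Proof. by move=> s; rewrite /restX; case: ifP => //; rewrite eqxx. Qed.

Lemma push_xsupported w : xsupported (push w).
Proof. by move=> s; rewrite /push; case: ifP => //; rewrite eqxx. Qed.

Lemma bd_xsupported c : xsupported c -> xsupported (bd c).
Proof. by move=> h t /bd_neq0 [v _ /h]; apply/is_xface_sub/subsetUr. Qed.

Lemma restYB_xsupported c d : xsupported d -> restY (fun s => c s - d s) = restY c.
Proof.
move=> hd; apply: functional_extensionality => s; rewrite /restY; case: ifP => // hs.
by case: (d s =P 0) => [->|/eqP /hd]; [rewrite subr0 | rewrite hs].
Qed.

(* Adding a y-vertex to an x-face leaves the support of c, so only the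
   x-vertices contribute to the boundary. *)
Lemma bd_pull c : xsupported c -> pull (bd c) = bd (pull c).
Proof.
move=> hc; apply: functional_extensionality => a; rewrite /pull /bd big_split_ord /=.
rewrite [X in _ + X]big1 ?addr0; last first.
  move=> j _; apply/eqP; apply: contraT.
  rewrite mulf_eq0 negb_or => /andP[_ /hc /eqP h].
  have : j \in ypart (rshift n j |: xv m a) by rewrite !inE eqxx.
  by rewrite h inE.
apply: eq_big => [k|k _]; first by rewrite lshift_in_xv.
by rewrite -/(bd_sign (xv m a) (lshift m k)) bd_sign_xv xvU1.
Qed.

Lemma pull_push w : pull (push w) = w.
Proof. by apply: functional_extensionality => a; rewrite /pull /push is_xface_xv xpart_xv. Qed.

Lemma push_pull c : xsupported c -> push (pull c) = c.
Proof.
move=> hc; apply: functional_extensionality => s; rewrite /pull /push.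
case: ifP => [/is_xfaceE <- //|h]; apply/esym/eqP; apply: contraT => /(hc s).
by rewrite h.
Qed.

Lemma bd_push w : bd (push w) = push (bd w).
Proof.
rewrite -[LHS](push_pull (bd_xsupported (@push_xsupported w))).
by rewrite bd_pull ?pull_push //; apply: push_xsupported.
Qed.

Lemma in_simplexV1 s : (s \in simplexV1 n m) = is_xface s.
Proof.
apply/imsetP/idP => [[a _ ->]|h]; first exact: is_xface_xv.
by exists (xpart s) => //; apply: is_xfaceE.
Qed.

Lemma xsupported_simplex_chain (D : {set {set 'I_(n + m)}}) i c :
  is_chain D i c -> xsupported c -> is_chain (simplexV1 n m) i c.
Proof. by move=> hc hX s /[dup] /hX; rewrite -in_simplexV1 => ? /hc []. Qed.

Lemma simplex_chain_xsupported i c : is_chain (simplexV1 n m) i c -> xsupported c.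
Proof. by move=> hc s /hc []; rewrite in_simplexV1. Qed.

Lemma simplexV1_acyclic : acyclic (simplexV1 n m).
Proof.
case: (posnP n) => [n0|npos] i c cc.
  have [hc _] := cc; suff -> : c = fun _ => 0 by apply: boundary0.
  apply: functional_extensionality => s; apply/eqP; apply: contraT.
  move=> /hc []; rewrite in_simplexV1 => /is_xfaceE ->; rewrite card_xv.
  by have := max_card (xpart s); rewrite card_ord; lia.
pose x0 := lshift m (Ordinal npos).
apply: (@local_cones_acyclic _ _ pred0 (fun _ => x0) _ _ _ i c cc) => //.
  by move=> s t ts; rewrite !in_simplexV1; apply: is_xface_sub.
move=> t; rewrite !in_simplexV1 /is_xface => /eqP <-.
by apply/eqP/setP => j; rewrite !inE eq_rlshift.
Qed.

End SplitVertices.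

Arguments push {n} m w s.

Section Complexes.
Variables (n m : nat) (Gamma : {set {set 'I_n}}) (G : 'I_m -> {set 'I_n}).
Implicit Types (s t : {set 'I_(n + m)}) (c : chainf (n + m)) (w : chainf n) (k : nat).

Lemma in_Delta' s : (s \in Delta' Gamma G) =
  (xpart s \in Gamma) && (ypart s \subset [set j | xpart s \subset ~: G j]).
Proof.
apply/imset2P/andP => [[a b aG]|[h1 h2]].
  by rewrite inE => bG ->; rewrite xpart_xvyv ypart_xvyv.
by exists (xpart s) (ypart s); rewrite ?inE ?xpart_ypartK.
Qed.

Lemma in_Delta s : (s \in Delta Gamma G) = (s \in Delta' Gamma G) || is_xface s.
Proof. by rewrite in_setU in_simplexV1. Qed.

Lemma Delta'_sub : {subset Delta' Gamma G <= Delta Gamma G}.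
Proof. by move=> s h; rewrite in_Delta h. Qed.

Lemma simplexV1_sub : {subset simplexV1 n m <= Delta Gamma G}.
Proof. by move=> s; rewrite in_simplexV1 in_Delta => ->; rewrite orbT. Qed.

Lemma Delta'_closed : down_closed Gamma -> down_closed (Delta' Gamma G).
Proof.
move=> Gamma_closed s t ts; rewrite !in_Delta' => /andP[xs ys].
have xts := xpart_sub ts.
apply/andP; split; first exact: Gamma_closed xs.
apply/subsetP => j /(subsetP (ypart_sub ts)) /(subsetP ys).
by rewrite !inE => /(subset_trans xts).
Qed.

Lemma restY_chain k c : is_chain (Delta Gamma G) k c -> is_chain (Delta' Gamma G) k (restY c).
Proof.
move=> hc s; rewrite /restY; case: ifP => [_|hX]; first by rewrite eqxx.
by move=> /hc [+ ->]; rewrite in_Delta hX orbF.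
Qed.

Lemma pull_chain k c : is_chain (Delta' Gamma G) k c -> is_chain Gamma k (pull c).
Proof. by move=> hc a /hc; rewrite in_Delta' xpart_xv card_xv => -[/andP[]]. Qed.

Lemma push_chain k w : is_chain Gamma k w -> is_chain (Delta' Gamma G) k (push m w).
Proof.
move=> hw s; rewrite /push; case: ifP => [hX|]; last by rewrite eqxx.
move=> /hw [aG ak]; rewrite (is_xfaceE hX) in_Delta' xpart_xv ypart_xv sub0set card_xv.
by rewrite aG.
Qed.

(* The apex of a face sigma u tau is some y_j with sigma \subset V1 \ G_j: it
   depends only on the x-part sigma. *)
Lemma Delta'_acyclic : is_complex Gamma ->
  (forall a, a \in Gamma -> exists j, a \subset ~: G j) -> acyclic (Delta' Gamma G).
Proof.
move=> [Gamma0 Gamma_closed] hY; have [j0 _] := hY _ Gamma0.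
pose apex t := rshift n (odflt j0 [pick j | xpart t \subset ~: G j]).
apply: (@local_cones_acyclic _ _ (fun i => (i < n)%N) apex).
- exact: Delta'_closed.
- by move=> t; rewrite /= -ltnNge leq_addr.
move=> t; rewrite /apex !in_Delta' => /andP[xt yt].
have -> : xpart [set u in t | (u < n)%N] = xpart t.
  by apply/setP => k; rewrite !inE /= ltn_ord andbT.
 case: pickP => [j hj|none]; last first.
  by have [j hj] := hY _ xt; move: (none j); rewrite hj.
have -> : xpart (rshift n j |: t) = xpart t.
  by apply/setP => k; rewrite !inE eq_lrshift.
rewrite xt /=; apply/subsetP => i; rewrite !inE eq_rshift.
by case: eqP => [-> //|_ it]; move/subsetP: yt => /(_ i); rewrite !inE; apply.
Qed.

End Complexes.

Lemma face_sub_facet N (K : {set {set 'I_N}}) s :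
  s \in K -> exists2 F, F \in facets K & s \subset F.
Proof.
move=> sK; have [t /andP[tK st] tmax] :=
  @arg_maxnP _ s (fun t => (t \in K) && (s \subset t)) (fun t => #|t|) (introT andP (conj sK (subxx s))).
exists t => //; rewrite inE tK; apply/forallP => u; apply/implyP => uK; apply/implyP => tu.
by rewrite eq_sym eqEcard tu /=; apply: tmax; rewrite uK (subset_trans st tu).
Qed.

Section Connecting.
Variables (n m : nat) (Gamma : {set {set 'I_n}}) (G : 'I_m -> {set 'I_n}).
Hypothesis Gamma_complex : is_complex Gamma.
Hypothesis faces_covered : forall a, a \in Gamma -> exists j, a \subset ~: G j.
Implicit Types (z c : chainf (n + m)) (w : chainf n) (i : nat).

Local Notation Delta := (Delta Gamma G).
Local Notation Delta' := (Delta' Gamma G).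

Definition connecting z : chainf n := pull (bd (restY z)).

Let closed_Delta' : down_closed Delta' := Delta'_closed Gamma_complex.2.
Let acyclic_Delta' : acyclic Delta' := Delta'_acyclic Gamma_complex faces_covered.

Lemma bd_restY_xsupported z : bd z =1 (fun _ => 0) -> xsupported (bd (restY z)).
Proof.
move=> zc t h; have := zc t; rewrite bd_restXY => /eqP; rewrite addr_eq0 => /eqP e.
by apply: (bd_xsupported (@restX_xsupported n m z)); rewrite e oppr_eq0.
Qed.

Lemma connecting_cycle i z : is_cycle Delta i.+1 z -> is_cycle Gamma i (connecting z).
Proof.
move=> [zch zcy]; split; first exact/pull_chain/(bd_chain closed_Delta')/restY_chain.
by move=> a; rewrite -(bd_pull (bd_restY_xsupported zcy)) /pull bd_bd.
Qed.

Lemma connecting_additive i z z' :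
  is_boundary Gamma i (subc (subc (connecting (addc z z')) (connecting z)) (connecting z')).
Proof.
suff -> : subc (subc (connecting (addc z z')) (connecting z)) (connecting z') = fun _ => 0.
  exact: boundary0.
apply: functional_extensionality => a; rewrite /subc /connecting /pull.
rewrite (@eq_bd _ (restY (addc z z')) (fun s => restY z s + restY z' s)) ?bdD; first ring.
by move=> s; rewrite /restY /addc; case: ifP; rewrite ?addr0.
Qed.

(* For z = bd c, the part of z outside the simplex is the boundary u of
   restY c; then bd (restY u) = - bd (restX u), and restX u lives on Gamma. *)
Lemma connecting_boundary i z : is_boundary Delta i.+1 z -> is_boundary Gamma i (connecting z).
Proof.
move=> [c [cch zE]]; rewrite /connecting; set u := bd (restY c).
have -> : restY z = restY u.
  apply: functional_extensionality => s; rewrite /restY /u zE; case: ifP => // hs.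
  rewrite bd_restXY; have := @bd_xsupported n m _ (@restX_xsupported n m c) s.
  by case: (bd (restX c) s =P 0) => [->|_ /(_ isT)]; [rewrite add0r | rewrite hs].
exists (fun a => - pull (restX u) a); split.
  by apply/chainN/pull_chain/chain_mask/(bd_chain closed_Delta')/restY_chain.
move=> a; rewrite bdN -(bd_pull (@restX_xsupported n m u)) /connecting /pull.
have := bd_restXY u (xv m a); rewrite /u bd_bd -/u => /eqP.
by rewrite eq_sym addr_eq0 => /eqP ->; rewrite opprK.
Qed.

(* If connecting z = bd c, then restY z - push c is a cycle of the acyclic
   Delta', and what remains of z is an x-supported cycle, bounded in the
   simplex. *)
Lemma connecting_injective i z : is_cycle Delta i.+1 z ->
  is_boundary Gamma i (connecting z) -> is_boundary Delta i.+1 z.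
Proof.
move=> [zch zcy] [c [cch cE]].
have bd_push_c : bd (push m c) = bd (restY z).
  rewrite bd_push (_ : bd c = connecting z); first exact/push_pull/bd_restY_xsupported.
  by apply: functional_extensionality => a; rewrite cE.
pose d s := restY z s - push m c s.
have [u [uch dE]] : is_boundary Delta' i.+1 d.
  apply: acyclic_Delta'; split; first exact/chainB/push_chain/cch/restY_chain.
  by move=> t; rewrite /d bdB bd_push_c subrr.
pose e s := restX z s + push m c s.
have eE s : e s = z s - d s by rewrite /e /d (restXY z s); ring.
have ech : is_chain (simplexV1 n m) i.+1 e.
  apply: xsupported_simplex_chain.
    apply: chainD; first exact: chain_mask zch.
    exact/(chain_sub (@Delta'_sub _ _ _ _))/push_chain.
  by move=> s /addr_neq0_split [/restX_xsupported|/push_xsupported].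
have [v [vch vE]] : is_boundary (simplexV1 n m) i.+1 e.
  apply: simplexV1_acyclic; split => // t.
  by rewrite (eq_bd eE) bdB zcy (eq_bd dE) bd_bd subrr.
exists (fun s => v s + u s); split.
  by apply: chainD; apply: chain_sub; [exact: simplexV1_sub | | exact: Delta'_sub |].
by move=> t; rewrite bdD -vE -dE eE subrK.
Qed.

(* push w bounds a in Delta' and b in the simplex; a - b is a cycle of Delta
   mapped back to w. *)
Lemma connecting_surjective i w : is_cycle Gamma i w ->
  exists2 z, is_cycle Delta i.+1 z & is_boundary Gamma i (subc w (connecting z)).
Proof.
move=> [wch wcy].
have pwcy : bd (push m w) =1 (fun _ => 0).
  by move=> t; rewrite bd_push /push; case: ifP => //; rewrite wcy.
have pwch := push_chain G wch.
have [a [ach aE]] := acyclic_Delta' (conj pwch pwcy).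
have [b [bch bE]] : is_boundary (simplexV1 n m) i (push m w).
  apply: simplexV1_acyclic; split => //.
  exact: xsupported_simplex_chain pwch (@push_xsupported n m w).
exists (fun s => a s - b s).
  split; first by apply: chainB; apply: chain_sub; [exact: Delta'_sub | | exact: simplexV1_sub |].
  by move=> t; rewrite bdB -aE -bE subrr.
rewrite /connecting restYB_xsupported; last exact: simplex_chain_xsupported bch.
exists (pull (restX a)); split; first by apply: (pull_chain (G := G)); apply: chain_mask.
move=> s; rewrite /subc -(bd_pull (@restX_xsupported n m a)).
by rewrite -{1}(pull_push m w) /pull aE bd_restXY addrK.
Qed.

End Connecting.

Theorem theorem4p7 (n m : nat) (Gamma : {set {set 'I_n}}) (G : 'I_m -> {set 'I_n}) :
  is_complex Gamma ->
  #|facets Gamma| = m ->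
  (forall j : 'I_m, ~: G j \in Gamma) ->
  (forall F, F \in facets Gamma -> exists j : 'I_m, F = ~: G j) ->
  forall i : nat, rhomology_iso (Delta Gamma G) i.+1 Gamma i.
Proof.
move=> Gamma_complex _ _ facetsE i.
have faces_covered a : a \in Gamma -> exists j, a \subset ~: G j.
  by case/face_sub_facet => F /facetsE [j ->]; exists j.
exists (@connecting n m); split.
- exact: connecting_cycle.
- by move=> z z' _ _; apply: connecting_additive.
- exact: connecting_boundary.
- exact: connecting_injective.
- exact: connecting_surjective.
Qed.
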